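(* Let $m\neq\pm1$ be a square-free integer, $p$ a prime, $k$ a positive integer, $\alpha$ a root of $X^{p^k}-m$ and $M=\mathbb{Q}(\alpha)$. Let $r$ be the remainder of $m$ modulo $p^{k+1}$ and $s:=v_p(m^p-m)-1$. For $t\in\mathbb{N}$ let $$h^{(r)}_t(X):=X^{p^k-p^{k-t}}+rX^{p^k-2p^{k-t}}+\ldots+r^{p^t-2}X^{p^{k-t}}+r^{p^t-1}=\frac{X^{p^k}-r^{p^t}}{X^{p^{k-t}}-r}\in\mathbb{Z}[X].$$ Then for every integer $t$ with $0\leq t\leq \min\{s,k\}$, the element $\frac{1}{p^t}h^{(r)}_t(\alpha)\in\mathbb{Q}(\alpha)$ is an algebraic integer.
   Context: $v_p$ denotes the $p$-adic valuation on $\mathbb{Q}$. *)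

From HB Require Import structures.
From mathcomp Require Import all_boot all_order all_algebra all_field.
Set Implicit Arguments. Unset Strict Implicit. Unset Printing Implicit Defensive.
Import Order.TTheory GRing.Theory Num.Theory.
Local Open Scope ring_scope.

Definition squarefree_int (m : int) : Prop :=
  m != 0 /\ forall q : nat, prime q -> ~~ (q * q %| `|m|)%N.

Definition h_poly (R : nzRingType) (p k t : nat) (r : R) : {poly R} :=
  \sum_(i < p ^ t) (r ^+ i) *: 'X^(p ^ (k - t) * (p ^ t - 1 - i)).

(* Put beta := alpha ^ p^(k-t), so that beta ^ p^t = m, and x := h(alpha) / p^t.
   As r = m mod p^(k+1) and m^p = m mod p^(t+1), we have m - r^(p^t) = d p^t with
   p | d, and d <> 0 because m is not a perfect power; the telescoping identity
   (beta - r) h(alpha) = beta^(p^t) - r^(p^t) then gives beta x = d + r x.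
   Raising this to the power N = p^t and dividing by d N yields
   x^N = sum_(i < N) C(N, i) d^(N-1-i) r^i / N * x^i, whose coefficients are
   integers because p^t divides C(p^t, i) p^(p^t-1-i) for i < p^t. *)

From HB Require Import structures.
From mathcomp Require Import all_boot all_order all_algebra all_field.
From mathcomp Require Import zify ring.
Set Implicit Arguments. Unset Strict Implicit. Unset Printing Implicit Defensive.
Import Order.TTheory GRing.Theory Num.Theory.
Local Open Scope ring_scope.

Lemma dvdn_gcdn_mul_bin (n j : nat) : (n %| gcdn n j * 'C(n, j))%N.
Proof.
case: j => [|j]; first by rewrite gcdn0 dvdn_mulr.
rewrite muln_gcdl dvdn_gcd dvdn_mulr //=.
by rewrite -mul_bin_diag dvdn_mulr.
Qed.

Lemma pfactor_dvdn_bin_mul (p t j : nat) : prime p -> (j < p ^ t)%N ->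
  (p ^ t %| 'C(p ^ t, j) * p ^ (p ^ t - 1 - j))%N.
Proof.
move=> p_pr lt_j_pt; have p_gt1 := prime_gt1 p_pr.
have /(dvdn_pfactor _ _ p_pr) [b _ gcdE] := dvdn_gcdl (p ^ t) j.
have dvd_pb_sub : (p ^ b %| p ^ t - j)%N.
  by rewrite -gcdE dvdn_sub ?dvdn_gcdl ?dvdn_gcdr.
have le_pb_sub : (p ^ b <= p ^ t - j)%N by rewrite dvdn_leq ?subn_gt0.
have lt_b_pb := ltn_expl b p_gt1.
apply: dvdn_trans (dvdn_gcdn_mul_bin _ j) _.
by rewrite gcdE mulnC dvdn_mul // dvdn_exp2l //; lia.
Qed.

Lemma dvdz_subXX (d a b : int) (n : nat) :
  (d %| a - b)%Z -> (d %| a ^+ n - b ^+ n)%Z.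
Proof. by move=> dvd_d_ab; rewrite subrXX dvdz_mulr. Qed.

Lemma dvdz_subX_expn (d m : int) (p i : nat) :
  (d %| m ^+ p - m)%Z -> (d %| m ^+ (p ^ i) - m)%Z.
Proof.
move=> dvd_d_mpm; elim: i => [|i IHi]; first by rewrite expn0 expr1 subrr dvdz0.
have -> : m ^+ (p ^ i.+1) - m = ((m ^+ (p ^ i)) ^+ p - m ^+ p) + (m ^+ p - m).
  by rewrite expnS mulnC exprM addrA subrK.
by rewrite rpredD // dvdz_subXX.
Qed.

Lemma dvdz_modz_sub (d e m : int) : (d %| e)%Z -> (d %| (m %% e)%Z - m)%Z.
Proof.
move=> dvd_de; rewrite {2}(divz_eq m e) opprD addrCA subrr addr0 rpredN.
exact: dvdz_mull.
Qed.

Lemma dvdz_sub_modzX (d e m : int) (p i : nat) :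
  (d %| e)%Z -> (d %| m ^+ p - m)%Z -> (d %| m - (m %% e)%Z ^+ (p ^ i))%Z.
Proof.
move=> dvd_de dvd_d_mpm.
have -> : m - (m %% e)%Z ^+ (p ^ i) =
    - (((m %% e)%Z ^+ (p ^ i) - m ^+ (p ^ i)) + (m ^+ (p ^ i) - m)).
  by rewrite addrA subrK opprB.
by rewrite rpredN rpredD ?dvdz_subX_expn ?dvdz_subXX ?dvdz_modz_sub.
Qed.

Lemma squarefree_int_neq_expr (m r : int) (n : nat) :
  squarefree_int m -> m != 1 -> m != -1 -> (1 < n)%N -> m != r ^+ n.
Proof.
move=> [m_neq0 sqf] m_neq1 m_neqN1 n_gt1; apply/eqP => mE.
have absmE : `|m|%N = (`|r| ^ n)%N by rewrite mE abszX.
case: (ltngtP `|r|%N 1) => [r_lt1 | r_gt1 | r_eq1].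
- have r_eq0 : `|r|%N = 0%N by lia.
  by move: m_neq0; rewrite -absz_eq0 absmE r_eq0 exp0n // ltnW.
- have q_pr := pdiv_prime r_gt1.
  move: (sqf _ q_pr); rewrite absmE.
  have -> : n = (n - 2).+2 by lia.
  by rewrite !expnS mulnA dvdn_mulr // dvdn_mul // pdiv_dvd.
- move: absmE; rewrite r_eq1 exp1n.
  by case: m m_neq1 m_neqN1 {mE m_neq0 sqf} => [[|[|]]|[|]].
Qed.

Lemma subrXX_mul_binomial (R : comPzRingType) (beta r d x : R) (n : nat) :
  beta * x = d + r * x ->
  (beta ^+ n - r ^+ n) * x ^+ n =
    \sum_(i < n) d ^+ (n - i) * (r * x) ^+ i *+ 'C(n, i).
Proof.
move=> betaxE; rewrite mulrBl -!exprMn betaxE exprDn big_ord_recr /=.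
by rewrite subnn expr0 mul1r binn mulr1n addrK.
Qed.

Lemma Aint_int_power_relation (n : nat) (c : nat -> int) (x : algC) :
  x ^+ n = \sum_(i < n) (c i)%:~R * x ^+ i -> x \in Aint.
Proof.
move=> xnE; pose Q := 'X^n - \poly_(i < n) ((c i)%:~R : algC).
apply: (@root_monic_Aint Q).
- by rewrite /root /Q !hornerE horner_poly xnE subrr.
- rewrite monicE lead_coefDl ?lead_coefXn // size_polyXn size_polyN ltnS.
  exact: size_poly.
- apply/polyOverP => i; rewrite /Q coefB coefXn coef_poly.
  by rewrite rpredB ?rpred_nat //; case: ifP; rewrite ?intr_int ?rpred0.
Qed.

Lemma h_poly_mul (R : comNzRingType) (p k t : nat) (r : R) : (t <= k)%N ->
  ('X^(p ^ (k - t)) - r%:P) * h_poly p k t r = 'X^(p ^ k) - (r ^+ (p ^ t))%:P.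
Proof.
move=> le_tk; have -> : (p ^ k = p ^ (k - t) * p ^ t)%N by rewrite -expnD subnK.
rewrite exprM polyC_exp subrXX.
congr (_ * _); apply: eq_bigr => i _.
by rewrite -polyC_exp mulrC mul_polyC -exprM subn1.
Qed.

Lemma dvdz_bin_mul_expr (p t i : nat) (d : int) :
  prime p -> (p %| d)%Z -> (i < p ^ t)%N ->
  ((p ^ t)%:Z %| 'C(p ^ t, i)%:Z * d ^+ (p ^ t - 1 - i))%Z.
Proof.
move=> p_pr /dvdzP [e ->] lt_i_pt.
rewrite exprMn mulrCA dvdz_mull // -[p%:Z]natz -natrX natz -PoszM.
exact: pfactor_dvdn_bin_mul.
Qed.

Lemma Aint_shifted_quotient (p t : nat) (d r : int) (beta y : algC) :
  prime p -> (p %| d)%Z -> d != 0 ->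
  (beta - r%:~R) * y = beta ^+ (p ^ t) - r%:~R ^+ (p ^ t) ->
  beta ^+ (p ^ t) - r%:~R ^+ (p ^ t) = d%:~R * (p ^ t)%:R ->
  (p ^ t)%:R^-1 * y \in Aint.
Proof.
move=> p_pr p_dvd_d d_neq0 yE betaNE; set N := (p ^ t)%N in yE betaNE *.
have N_neq0 : (N%:R : algC) != 0 by rewrite pnatr_eq0 -lt0n expn_gt0 prime_gt0.
have dN_neq0 : (d%:~R * N%:R : algC) != 0 by rewrite mulf_neq0 ?intr_eq0.
set x := N%:R^-1 * y.
have betaxE : beta * x = d%:~R + r%:~R * x.
  apply/eqP; rewrite -subr_eq -mulrBl /x mulrCA yE betaNE.
  by rewrite mulrCA mulVf ?mulr1.
pose c i := ('C(N, i)%:Z * d ^+ (N - 1 - i) * r ^+ i %/ N%:Z)%Z.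
have cE i : (i < N)%N -> c i * N%:Z = 'C(N, i)%:Z * d ^+ (N - 1 - i) * r ^+ i.
  by move=> lt_iN; rewrite divzK // dvdz_mulr // dvdz_bin_mul_expr.
apply: (@Aint_int_power_relation N c); apply: (mulfI dN_neq0).
rewrite -betaNE (subrXX_mul_binomial N betaxE) mulr_sumr.
apply: eq_bigr => i _; have lt_iN := ltn_ord i.
have ciE : (c i)%:~R * N%:R = 'C(N, i)%:R * d%:~R ^+ (N - 1 - i) * r%:~R ^+ i :> algC.
  by rewrite -[N%:R]/((N%:Z)%:~R) -intrM cE // !intrM !rmorphXn.
rewrite betaNE -mulrA [N%:R * _]mulrA [N%:R * _]mulrC ciE.
have -> : (N - i = (N - 1 - i).+1)%N by lia.
by rewrite exprS exprMn -mulr_natr; ring.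
Qed.

Theorem lemma3p1 (m : int) (p k : nat) (alpha : algC) (t : nat) :
  squarefree_int m -> m != 1 -> m != -1 ->
  prime p -> (0 < k)%N ->
  root ('X^(p ^ k) - (m%:~R)%:P) alpha ->
  let r : int := (m %% (p ^ k.+1)%:Z)%Z in
  let s : int := (logn p `|m ^+ p - m|)%:Z - 1 in
  (t <= k)%N -> t%:Z <= s ->
  (p ^ t)%:R^-1 * (h_poly p k t (r%:~R : algC)).[alpha] \in Aint.
Proof.
move=> sqf_m m_neq1 m_neqN1 p_pr _ alpha_root r s le_tk le_ts.
have [->|t_gt0] := posnP t.
  by rewrite /h_poly expn0 big_ord1 muln0 expr0 scale1r hornerC invr1 mul1r Aint1.
set N := (p ^ t)%N; set beta := alpha ^+ (p ^ (k - t)).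
have betaNE : beta ^+ N = m%:~R.
  move/rootP: alpha_root; rewrite !hornerE => /eqP; rewrite subr_eq0 => /eqP <-.
  by rewrite -exprM -expnD subnK.
have /dvdzP [e mrE] : ((p ^ t.+1)%:Z %| m - r ^+ N)%Z.
  apply: dvdz_sub_modzX; first by apply: dvdn_exp2l; rewrite ltnS.
  have le_t1_logn : (t.+1 <= logn p `|m ^+ p - m|)%N by move: le_ts; rewrite /s; lia.
  apply: dvdn_trans (dvdn_exp2l p le_t1_logn) _; exact: pfactor_dvdnn.
apply: (@Aint_shifted_quotient p t (e * p) r beta _ p_pr).
- exact: dvdz_mull (dvdzz _).
- have m_neq_rN : m != r ^+ N.
    by apply: squarefree_int_neq_expr; rewrite // -[1%N](expn0 p) ltn_exp2l ?prime_gt1.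
  apply: contra_neq m_neq_rN => ep0; apply/eqP.
  by rewrite -subr_eq0 mrE expnS PoszM mulrA ep0 mul0r.
- have := congr1 (horner^~ alpha) (h_poly_mul p (r%:~R : algC) le_tk).
  by rewrite hornerM !hornerE -exprM -expnD subnK // betaNE.
- by rewrite betaNE -rmorphXn -rmorphB /= mrE expnS PoszM mulrA intrM.
Qed.
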